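(* Let $\mu$ be a continuous probability measure on $\mathbb{R}^n$ and $\alpha\in[0,1]$. If $S\subset\mathbb{R}^n$ is a compact, connected set with $\mu(S)\ge\max\{\alpha,1-\alpha\}$, then there exists a function $f:S^{n-1}\to\mathbb{R}^n$ such that $\mu\big(H^+_{v,\langle v,f(v)\rangle}\big)=\alpha$ for all $v\in S^{n-1}$ and $\operatorname{Im} f\subset S$.
   Context: A continuous probability measure on $\mathbb{R}^n$ is a Borel probability measure absolutely continuous with respect to Lebesgue measure. For $v\ne 0$, $\lambda\in\mathbb{R}$: $H^+_{v,\lambda}=\{x\in\mathbb{R}^n:\langle x,v\rangle\ge\lambda\}$. *)

From HB Require Import structures.
From mathcomp Require Import all_boot all_order all_algebra.
From mathcomp Require Import all_classical all_reals all_analysis.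
Set Implicit Arguments. Unset Strict Implicit. Unset Printing Implicit Defensive.
Import Order.TTheory GRing.Theory Num.Theory.
Import numFieldNormedType.Exports.
Local Open Scope classical_set_scope.
Local Open Scope ring_scope.

(* Points of R^n are row vectors 'rV[R]_n (with their standard topology).
   For measure theory we use n.-tuple R, equipped by MathComp-Analysis with
   the product (= Borel) sigma-algebra; the two are identified by the
   canonical bijection below. *)
Definition rV_of_tuple {R : realType} {n : nat} (t : n.-tuple R) : 'rV[R]_n :=
  \row_i tnth t i.

Definition dotp {R : realType} {n : nat} (x y : 'rV[R]_n) : R :=
  \sum_(i < n) x ord0 i * y ord0 i.

Definition unit_sphere (R : realType) (n : nat) : set 'rV[R]_n :=
  [set v | dotp v v = 1].

Definition halfspace_pos {R : realType} {n : nat} (v : 'rV[R]_n) (lam : R)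
  : set 'rV[R]_n := [set x | lam <= dotp x v].

Definition box {R : realType} {n : nat} (a b : n.-tuple R) : set (n.-tuple R) :=
  [set x | forall i : 'I_n, tnth a i <= tnth x i <= tnth b i].

Definition box_volume {R : realType} {n : nat} (a b : n.-tuple R) : R :=
  \prod_(i < n) (tnth b i - tnth a i).

Definition lebesgue_null {R : realType} {n : nat} (A : set (n.-tuple R)) : Prop :=
  forall eps : R, 0 < eps ->
    exists a b : nat -> n.-tuple R,
      (forall k (i : 'I_n), tnth (a k) i <= tnth (b k) i) /\
      A `<=` \bigcup_k box (a k) (b k) /\
      (\sum_(0 <= k <oo) (box_volume (a k) (b k))%:E < eps%:E)%E.

(* A continuous probability measure on R^n: a Borel probability measure that is
   absolutely continuous w.r.t. Lebesgue measure. *)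
Definition continuous_prob {R : realType} {n : nat}
  (mu : probability (n.-tuple R) R) : Prop :=
  forall A : set (n.-tuple R), measurable A -> lebesgue_null A -> mu A = 0%E.

Definition muR {R : realType} {n : nat} (mu : probability (n.-tuple R) R)
  (A : set 'rV[R]_n) : \bar R := mu (rV_of_tuple @^-1` A).
Arguments unit_sphere R n : clear implicits.

From HB Require Import structures.
From mathcomp Require Import all_boot all_order all_algebra.
From mathcomp Require Import all_classical all_reals all_analysis.
From mathcomp Require Import ring lra.
Import Order.TTheory GRing.Theory Num.Theory.
Import numFieldNormedType.Exports.
Local Open Scope classical_set_scope.
Local Open Scope ring_scope.

(* Fix a unit vector v.  Hyperplanes are Lebesgue-null (they are covered by
   thin boxes), hence mu-null, so t |-> mu {x | t <= <x,v>} is continuous.  The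
   projection <S,v> is a compact interval [a,b] because S is compact and
   connected; at a the map is at least mu S >= alpha, and just above b it is at
   most 1 - mu S <= alpha.  An intermediate value t is attained, and it is the
   projection of a point of S. *)

Section tuple_measurability.
Context {R : realType} {n : nat}.

Lemma measurable_tnth_preimage (i : 'I_n) (B : set R) : measurable B ->
  measurable [set x : n.-tuple R | B (tnth x i)].
Proof. by move=> mB; have := measurable_tnth i measurableT mB; rewrite setTI. Qed.

Lemma measurable_box (a b : n.-tuple R) : measurable (box a b).
Proof.
have -> : box a b = \bigcap_(i in [set: 'I_n])
    [set x | [set` `[tnth a i, tnth b i]] (tnth x i)].
  apply/seteqP; split=> x /= hx i; first by move=> _; rewrite /= in_itv; apply: hx.
  by have := hx i I; rewrite /= in_itv.
by apply: fin_bigcap_measurable => // i _; apply: measurable_tnth_preimage.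
Qed.
End tuple_measurability.

Section open_measurability.
Context {R : realType} {n : nat}.

Definition rat_box (p : n.-tuple rat * n.-tuple rat) : set (n.-tuple R) :=
  box [tuple ratr (tnth p.1 i) | i < n] [tuple ratr (tnth p.2 i) | i < n].

Lemma rat_box_nbhs {O : set 'rV[R]_n} {x : n.-tuple R} :
  open O -> O (rV_of_tuple x) ->
  exists p, rat_box p x /\ rat_box p `<=` rV_of_tuple @^-1` O.
Proof.
move=> oO Ox; have /nbhs_ballP[e /= e0 xeO] : nbhs (rV_of_tuple x) O.
  exact: open_nbhs_nbhs.
have lo i : {q : rat | ratr q \in `](tnth x i - e), (tnth x i)[}.
  by apply: cid; apply: rat_in_itvoo; rewrite ltrBlDr ltrDl.
have hi i : {q : rat | ratr q \in `](tnth x i), (tnth x i + e)[}.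
  by apply: cid; apply: rat_in_itvoo; rewrite ltrDl.
exists ([tuple sval (lo i) | i < n], [tuple sval (hi i) | i < n]); split.
  move=> i; rewrite !tnth_mktuple.
  case: (lo i) => /= a; rewrite in_itv /= => /andP[_ /ltW ->].
  by case: (hi i) => /= b; rewrite in_itv /= => /andP[/ltW -> _].
move=> y yp; apply: xeO; rewrite mx_norm_ball /ball_ /=.
change (mx_norm (rV_of_tuple x - rV_of_tuple y) < e); rewrite mx_normrE.
apply: bigmax_lt => // -[i j] _ /=; rewrite (ord1 i) !mxE.
have := yp j; rewrite !tnth_mktuple /=.
case: (lo j) => /= a; rewrite in_itv /= => /andP[ha _].
case: (hi j) => /= b; rewrite in_itv /= => /andP[_ hb].
by move=> /andP[ay yb]; rewrite ltr_norml; apply/andP; split; lra.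
Qed.

Lemma measurable_open_preimage (O : set 'rV[R]_n) : open O ->
  measurable (rV_of_tuple @^-1` O).
Proof.
move=> oO.
pose G k := if @unpickle (n.-tuple rat * n.-tuple rat)%type k is Some p then
  (if `[< rat_box p `<=` rV_of_tuple @^-1` O >] then rat_box p else set0)
  else set0.
have -> : rV_of_tuple @^-1` O = \bigcup_k G k.
  apply/seteqP; split=> [x Ox|x [k _]].
    have [p [px pO]] := rat_box_nbhs oO Ox.
    by exists (pickle p) => //; rewrite /G pickleK asboolT.
  rewrite /G; case: unpickle => // p; case: ifP => // /asboolP; exact.
apply: bigcupT_measurable => k; rewrite /G.
by case: unpickle => // p; case: ifP => // _; apply: measurable_box.
Qed.

Lemma measurable_closed_preimage (S : set 'rV[R]_n) : closed S ->
  measurable (rV_of_tuple @^-1` S).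
Proof.
move=> cS; have -> : rV_of_tuple @^-1` S = ~` (rV_of_tuple @^-1` ~` S).
  by rewrite -preimage_setC setCK.
apply: measurableC; apply: measurable_open_preimage.
exact: closed_openC.
Qed.

End open_measurability.

Lemma countable_cover_of_finite_cover {R : realType} {n : nat} {I : finType}
    {A : set (n.-tuple R)} {eps : R} {a b : I -> n.-tuple R} : (0 < n)%N ->
  (forall k i, tnth (a k) i <= tnth (b k) i) ->
  A `<=` \bigcup_k box (a k) (b k) ->
  \sum_k box_volume (a k) (b k) < eps ->
  exists a' b' : nat -> n.-tuple R,
    (forall k i, tnth (a' k) i <= tnth (b' k) i) /\
    A `<=` \bigcup_k box (a' k) (b' k) /\
    (\sum_(0 <= k <oo) (box_volume (a' k) (b' k))%:E < eps%:E)%E.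
Proof.
move=> n0 ab Acov vol_eps.
(* Pad with degenerate boxes; their volume is 0 only because n > 0. *)
pose z := [tuple (0 : R) | _ < n].
pose e := enum I; pose a' k := oapp a z (onth e k); pose b' k := oapp b z (onth e k).
have onth_index i : onth e (index i e) = Some i.
  by rewrite onthE (nth_map i) ?nth_index ?index_mem ?mem_enum.
pose vol o := if o is Some i then box_volume (a i) (b i) else 0.
have volE k : box_volume (a' k) (b' k) = vol (onth e k).
  rewrite /a' /b'; case: onth => //= ; rewrite /box_volume.
  by rewrite (bigD1 (Ordinal n0)) //= subrr mul0r.
exists a', b'; split; [|split].
- by move=> k i; rewrite /a' /b'; case: onth => //= _; rewrite lexx.
- move=> x /Acov[i _ xi]; exists (index i e) => //.
  by rewrite /a' /b' onth_index.
rewrite (nneseries_split 0 (size e)); last first.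
  move=> k _; rewrite volE lee_fin; case: onth => //= i.
  by apply: prodr_ge0 => j _; rewrite subr_ge0.
rewrite eseries0 ?adde0; last by move=> k ek _; rewrite volE onth_default.
rewrite sumEFin lte_fin add0n.
rewrite (_ : \sum_(0 <= k < size e) _ = \sum_k box_volume (a k) (b k)) //.
rewrite -big_enum -/e -(big_map Some xpredT (fun o => vol o)).
rewrite (big_nth None) size_map; apply: eq_bigr => k _.
by rewrite volE onthE.
Qed.

Lemma exists_cell (R : realFieldType) (m : nat) (w y : R) :
  0 < w -> 0 <= y <= m.+1%:R * w -> exists q : 'I_m.+1, q%:R * w <= y <= q.+1%:R * w.
Proof.
move=> w0; elim: m => [|m IH] /andP[y0 ym]; first by exists ord0; rewrite mul0r y0.
have [yl|yg] := leP y (m.+1%:R * w); last by exists ord_max; rewrite ym andbT ltW.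
by have [q hq] := IH (introT andP (conj y0 yl)); exists (widen_ord (leqnSn _) q).
Qed.

Lemma dotp_rV_of_tuple {R : realType} {n : nat} (x : n.-tuple R) (v : 'rV[R]_n) :
  dotp (rV_of_tuple x) v = \sum_i tnth x i * v 0 i.
Proof. by apply: eq_bigr => i _; rewrite mxE. Qed.

Section hyperplane_cube.
Context {R : realType} {n : nat} (v : 'rV[R]_n) (t K : R) (j : 'I_n).
Hypotheses (vj_neq0 : v 0 j != 0) (K_gt0 : 0 < K).

Definition hyperplane_cube : set (n.-tuple R) :=
  [set x | dotp (rV_of_tuple x) v = t /\ forall i, `|tnth x i| <= K].

Definition slope_bound : R := (\sum_i `|v 0 i|) / `|v 0 j| + 1.

Lemma slope_bound_gt0 : 0 < slope_bound.
Proof. by apply: ltr_pwDr => //; apply: divr_ge0 => //; apply: sumr_ge0. Qed.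

(* Cells of side [cell_side] in the coordinates other than j.  On the
   hyperplane, x_j then lies within [slope_bound * cell_side] of [cell_center p];
   this interval is sliced into N pieces of width [slice_side], so the cover is
   indexed by {ffun 'I_n -> 'I_N} and has volume 2 slope_bound (2K)^n / N. *)
Section cells.
Variable m : nat.
Local Notation N := m.+1.
Local Notation cell := {ffun 'I_n -> 'I_N}.

Definition cell_side : R := 2 * K / N%:R.
Definition slice_side : R := 2 * slope_bound * cell_side / N%:R.

Definition cell_floor (p : cell) i : R := - K + (p i)%:R * cell_side.

Definition cell_center (p : cell) : R :=
  (t - \sum_(i | i != j) v 0 i * cell_floor p i) / v 0 j.

Definition cell_lo (p : cell) : n.-tuple R := [tuple
  if i == j then cell_center p - slope_bound * cell_side + (p j)%:R * slice_side
  else cell_floor p i | i < n].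

Definition cell_width i : R := if i == j then slice_side else cell_side.

Definition cell_hi (p : cell) : n.-tuple R :=
  [tuple tnth (cell_lo p) i + cell_width i | i < n].

Lemma cell_side_gt0 : 0 < cell_side.
Proof. by rewrite divr_gt0 ?mulr_gt0. Qed.

Lemma slice_side_gt0 : 0 < slice_side.
Proof. by rewrite divr_gt0 // !mulr_gt0 ?slope_bound_gt0 ?cell_side_gt0. Qed.

Lemma cell_width_gt0 i : 0 < cell_width i.
Proof. by rewrite /cell_width; case: ifP => _; rewrite ?slice_side_gt0 ?cell_side_gt0. Qed.

Lemma cell_lo_le_hi p i : tnth (cell_lo p) i <= tnth (cell_hi p) i.
Proof. by rewrite [leRHS]tnth_mktuple lerDl ltW ?cell_width_gt0. Qed.

Lemma exists_cell_floor (y : R) : `|y| <= K ->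
  exists q : 'I_N, - K + q%:R * cell_side <= y <= - K + q%:R * cell_side + cell_side.
Proof.
rewrite ler_norml => /andP[Ky yK].
have [|q /andP[q1 q2]] := @exists_cell _ m cell_side (y + K) cell_side_gt0.
  by rewrite /cell_side mulrC divfK ?pnatr_eq0 //; apply/andP; split; lra.
by exists q; move: q2; rewrite -addn1 natrD mulrDl mul1r => q2; apply/andP; split; lra.
Qed.

Lemma cell_center_close (p : cell) (x : n.-tuple R) :
  dotp (rV_of_tuple x) v = t ->
  (forall i, i != j -> cell_floor p i <= tnth x i <= cell_floor p i + cell_side) ->
  `|tnth x j - cell_center p| <= slope_bound * cell_side.
Proof.
rewrite dotp_rV_of_tuple (bigD1 j) //= => hx xp.
have vjx : (tnth x j - cell_center p) * v 0 j =
    \sum_(i | i != j) v 0 i * (cell_floor p i - tnth x i).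
  rewrite mulrBl /cell_center divfK // -hx.
  under [RHS]eq_bigr => i _ do rewrite mulrBr [v 0 i * tnth x i]mulrC.
  by rewrite sumrB; ring.
have : `|tnth x j - cell_center p| * `|v 0 j| <= (\sum_i `|v 0 i|) * cell_side.
  rewrite -normrM vjx; apply: le_trans (ler_norm_sum _ _ _) _.
  apply: le_trans (_ : \sum_(i | i != j) `|v 0 i| * cell_side <= _).
    apply: ler_sum => i ij; rewrite normrM ler_wpM2l // distrC ler_norml.
    by have /andP[] := xp i ij => ? ?; apply/andP; split; lra.
  rewrite -mulr_suml ler_wpM2r ?(ltW cell_side_gt0) //.
  by rewrite [X in _ <= X](bigD1 j) //= lerDr.
rewrite -ler_pdivlMr ?normr_gt0 // => /le_trans; apply.
by rewrite /slope_bound mulrDl mul1r mulrAC lerDl (ltW cell_side_gt0).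
Qed.

Lemma hyperplane_cube_covered :
  hyperplane_cube `<=` \bigcup_(p : cell) box (cell_lo p) (cell_hi p).
Proof.
move=> x [hx xK].
have /choice[q hq] := fun i => exists_cell_floor _ (xK i).
pose p0 : cell := finfun q.
have p0x i : cell_floor p0 i <= tnth x i <= cell_floor p0 i + cell_side.
  by rewrite /cell_floor ffunE; apply: hq.
have := cell_center_close _ _ hx (fun i _ => p0x i); rewrite ler_norml => /andP[c1 c2].
have [|r /andP[r1 r2]] := @exists_cell _ m slice_side
    (tnth x j - cell_center p0 + slope_bound * cell_side) slice_side_gt0.
  have -> : N%:R * slice_side = 2 * slope_bound * cell_side.
    by rewrite /slice_side mulrC divfK ?pnatr_eq0.
  by apply/andP; split; lra.
pose p : cell := [ffun i => if i == j then r else p0 i].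
have centerE : cell_center p = cell_center p0.
  congr ((_ - _) / _); apply: eq_bigr => i ij.
  by rewrite /cell_floor !ffunE (negbTE ij).
exists p => // i; rewrite /cell_hi !tnth_mktuple /cell_width.
have [->|ij] := eqVneq i j.
  rewrite centerE ffunE eqxx.
  rewrite mulr_natl mulrSr -mulr_natl in r2.
  by apply/andP; split; lra.
by rewrite /cell_floor ffunE (negbTE ij); apply: p0x.
Qed.

Lemma cells_volume : \sum_(p : cell) box_volume (cell_lo p) (cell_hi p) =
  2 * slope_bound * (2 * K) ^+ n / N%:R.
Proof.
have n_gt0 : (0 < n)%N by apply: leq_ltn_trans (ltn_ord j).
have vol p : box_volume (cell_lo p) (cell_hi p) = slice_side * cell_side ^+ n.-1.
  rewrite /box_volume (bigD1 j) //= /cell_hi tnth_mktuple addrC addKr /cell_width eqxx.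
  congr (_ * _); transitivity (\prod_(i | i != j) cell_side).
    by apply: eq_bigr => i ij; rewrite tnth_mktuple addrC addKr /cell_width (negbTE ij).
  by rewrite prodr_const cardC1 card_ord.
rewrite (eq_bigr _ (fun p _ => vol p)) sumr_const card_ffun !card_ord -(mulr_natr _ (N ^ n)).
rewrite natrX /slice_side /cell_side -[in RHS](prednK n_gt0) -[in LHS](prednK n_gt0).
rewrite expr_div_n !exprS /=; field.
by rewrite addrC natr1 expf_neq0 ?pnatr_eq0.
Qed.

End cells.

Lemma hyperplane_cube_null : lebesgue_null hyperplane_cube.
Proof.
move=> eps eps_gt0.
pose C := 2 * slope_bound * (2 * K) ^+ n.
have [m Cm] : exists m : nat, C / eps < m.+1%:R.
  by exists (Num.Def.trunc (C / eps)); apply: truncnS_gt.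
apply: (countable_cover_of_finite_cover _ (@cell_lo_le_hi m) (@hyperplane_cube_covered m)).
  exact: leq_ltn_trans (ltn_ord j).
by rewrite cells_volume -/C ltr_pdivrMr // mulrC -ltr_pdivrMr.
Qed.

End hyperplane_cube.

Lemma measurable_dotp_rV_of_tuple {R : realType} {n : nat} (v : 'rV[R]_n) :
  measurable_fun setT (fun x : n.-tuple R => dotp (rV_of_tuple x) v).
Proof.
rewrite (_ : (fun x => _) = fun x => \sum_(i <- index_enum 'I_n) tnth x i * v 0 i).
  apply: measurable_sum => i; apply: measurable_realfun.measurable_funM => //.
  exact: measurable_tnth.
by apply/funext => x; rewrite dotp_rV_of_tuple.
Qed.

Lemma continuous_prob_hyperplane {R : realType} {n : nat}
    (mu : probability (n.-tuple R) R) (v : 'rV[R]_n) (t : R) :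
  continuous_prob mu -> v != 0 ->
  mu [set x | dotp (rV_of_tuple x) v = t] = 0%E.
Proof.
move=> mu_cont v_neq0.
have [j vj] : exists j, v 0 j != 0.
  apply/existsP; apply: contraNT v_neq0 => /existsPn vj0.
  by apply/eqP/rowP => j; rewrite !mxE; apply/eqP/negPn/vj0.
have mhyp : measurable [set x | dotp (rV_of_tuple x) v = t].
  by have := measurable_dotp_rV_of_tuple v measurableT _ (measurable_set1 t); rewrite setTI.
have cubes : [set x | dotp (rV_of_tuple x) v = t] =
    \bigcup_k hyperplane_cube v t k.+1%:R.
  apply/seteqP; split=> [x hx|x [k _ []] //].
  exists (Num.Def.trunc (\sum_i `|tnth x i|)) => //; split=> // i.
  apply: le_trans (ltW (truncnS_gt _)).
  by rewrite (bigD1 i) //= lerDl sumr_ge0.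
apply: (measure_negligible mhyp); rewrite cubes; apply: negligible_bigcup => k.
have mcube : measurable (hyperplane_cube v t k.+1%:R).
  pose c : n.-tuple R := [tuple k.+1%:R | _ < n].
  have -> : hyperplane_cube v t k.+1%:R =
      [set x | dotp (rV_of_tuple x) v = t] `&` box [tuple - tnth c i | i < n] c.
    apply/seteqP; split=> x [xt xc]; split=> // i; move: (xc i);
      by rewrite !tnth_mktuple ler_norml.
  exact: measurableI (measurable_box _ _).
exists (hyperplane_cube v t k.+1%:R); split => //.
by apply: mu_cont => //; exact: hyperplane_cube_null vj _.
Qed.

Section atomless_level.
Context {R : realType} {d} {T : measurableType d} (P : probability T R) {phi : T -> R}.
Hypothesis mphi : measurable_fun setT phi.
Hypothesis phi_atomless : forall t, P [set x | phi x = t] = 0%E.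

Let measurable_phi_preimage (B : set R) : measurable B -> measurable (phi @^-1` B).
Proof. by move=> mB; have := mphi measurableT _ mB; rewrite setTI. Qed.

Lemma measurable_superlevel t : measurable [set x | t <= phi x].
Proof.
rewrite (_ : [set x | _] = phi @^-1` `[t, +oo[); first exact: measurable_phi_preimage.
by apply/seteqP; split => x /=; rewrite in_itv /= andbT.
Qed.

Lemma measurable_strict_superlevel t : measurable [set x | t < phi x].
Proof.
rewrite (_ : [set x | _] = phi @^-1` `]t, +oo[); first exact: measurable_phi_preimage.
by apply/seteqP; split => x /=; rewrite in_itv /= andbT.
Qed.

Local Open Scope ereal_scope.

Lemma measure_ge_left_limit (a : \bar R) (t : R) :
  (forall s, (s < t)%R -> a <= P [set x | (s <= phi x)%R]) ->
  a <= P [set x | (t <= phi x)%R].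
Proof.
move=> H; pose F k := [set x | (t - k.+1%:R^-1 <= phi x)%R].
have capF : \bigcap_k F k = [set x | (t <= phi x)%R].
  apply/seteqP; split=> x /=; last first.
    by move=> tx k _; apply: le_trans tx; rewrite lerBlDr lerDl.
  move=> Fx; rewrite leNgt; apply/negP => /ltr_add_invr[k hk].
  by have := Fx k I; rewrite /F /= lerBlDr => /(lt_le_trans hk); rewrite ltxx.
have F_noninc : nonincreasing_seq F.
  move=> i j ij; apply/subsetPset => x; rewrite /F /=; apply: le_trans.
  by rewrite lerB // lef_pV2 ?posrE ?ltr0n // ler_nat.
have mcapF : measurable (\bigcap_k F k) by rewrite capF; exact: measurable_superlevel.
have := nonincreasing_cvg_mu (le_lt_trans (probability_le1 P (measurable_superlevel _)) (ltry 1))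
  (fun k => measurable_superlevel _) mcapF F_noninc.
rewrite capF => F_cvg; rewrite -(cvg_lim _ F_cvg) //.
apply: lime_ge; first by apply/cvg_ex; eexists; exact: F_cvg.
by apply: nearW => k; apply: H; rewrite ltrBlDr ltrDl.
Qed.

Lemma measure_gt_right_limit (a : \bar R) (t : R) :
  (forall s, (t < s)%R -> P [set x | (s <= phi x)%R] <= a) ->
  P [set x | (t < phi x)%R] <= a.
Proof.
move=> H; pose F k := [set x | (t + k.+1%:R^-1 <= phi x)%R].
have cupF : \bigcup_k F k = [set x | (t < phi x)%R].
  apply/seteqP; split=> x /=; first by move=> [k _]; apply: lt_le_trans; rewrite ltrDl.
  by move=> /ltr_add_invr[k hk]; exists k => //; exact: ltW.
have F_nondec : nondecreasing_seq F.
  move=> i j ij; apply/subsetPset => x; rewrite /F /=; apply: le_trans.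
  by rewrite lerD2l lef_pV2 ?posrE ?ltr0n // ler_nat.
have mcupF : measurable (\bigcup_k F k).
  by rewrite cupF; exact: measurable_strict_superlevel.
have := nondecreasing_cvg_mu (mu := P) (fun k => measurable_superlevel _) mcupF F_nondec.
rewrite cupF => F_cvg; rewrite -(cvg_lim _ F_cvg) //.
apply: lime_le; first by apply/cvg_ex; eexists; exact: F_cvg.
by apply: nearW => k; apply: H; rewrite ltrDl.
Qed.

Lemma measure_ge_gt (t : R) : P [set x | (t <= phi x)%R] = P [set x | (t < phi x)%R].
Proof.
have -> : [set x | (t <= phi x)%R] = [set x | (t < phi x)%R] `|` [set x | phi x = t].
  apply/seteqP; split=> x /=; last by move=> [/ltW //| ->].
  by rewrite le_eqVlt => /orP[/eqP ->|]; [right|left].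
rewrite -[RHS]adde0 -(phi_atomless t); apply: measureU.
- exact: measurable_strict_superlevel.
- exact: measurable_phi_preimage (measurable_set1 t).
- by apply/seteqP; split=> x // [/= + xt]; rewrite xt ltxx.
Qed.

Lemma exists_level_measure_ge (al a b : R) : (a <= b)%R ->
  al%:E <= P [set x | (a <= phi x)%R] -> P [set x | (b < phi x)%R] <= al%:E ->
  exists2 t, (a <= t <= b)%R & P [set x | (t <= phi x)%R] = al%:E.
Proof.
move=> ab Ha Hb.
pose E := [set t | (a <= t <= b)%R /\ al%:E <= P [set x | (t <= phi x)%R]].
have Ea : E a by rewrite /E /= lexx ab.
have supE : has_sup E by split; [exists a | exists b => s [/andP[]]].
have a_le : (a <= sup E)%R by apply: sup_upper_bound.
have le_b : (sup E <= b)%R by apply: ge_sup; [exists a | move=> s [/andP[]]].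
exists (sup E); first by rewrite a_le le_b.
apply/eqP; rewrite eq_le; apply/andP; split; last first.
  apply: measure_ge_left_limit => s sE.
  have [u [_ Eu] su] := sup_adherent (ltac:(by rewrite subr_gt0) : (0 < sup E - s)%R) supE.
  apply: (le_trans Eu); apply: le_measure; rewrite ?inE; try exact: measurable_superlevel.
  by move=> x /=; apply: le_trans; apply: ltW; rewrite opprB addrCA subrr addr0 in su.
rewrite measure_ge_gt; apply: measure_gt_right_limit => s Es.
have [sb|bs] := leP s b.
  rewrite leNgt; apply/negP => hlt.
  have : E s by split; [rewrite sb (le_trans a_le (ltW Es)) | exact: ltW].
  by move/(sup_upper_bound supE); rewrite leNgt Es.
apply: le_trans Hb; apply: le_measure; rewrite ?inE.
- exact: measurable_superlevel.
- exact: measurable_strict_superlevel.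
- by move=> x /=; exact: lt_le_trans.
Qed.

End atomless_level.

Lemma continuous_dotpl {R : realType} {n : nat} (v : 'rV[R]_n) :
  continuous (fun x : 'rV[R]_n => dotp x v).
Proof.
rewrite /dotp; apply: continuous_big => [|i _].
  exact: add_continuous.
move=> x; apply: (@continuousM _ _ (fun y : 'rV[R]_n => y 0 i) (fun=> v 0 i)).
  exact: coord_continuous.
exact: cst_continuous.
Qed.

Lemma dotpC {R : realType} {n : nat} (x y : 'rV[R]_n) : dotp x y = dotp y x.
Proof. by apply: eq_bigr => i _; rewrite mulrC. Qed.

Lemma exists_halfspace_through_set {R : realType} {n : nat}
    {mu : probability (n.-tuple R) R} {S : set 'rV[R]_n} {alpha : R} {v : 'rV[R]_n} :
  continuous_prob mu -> compact S -> connected S -> S !=set0 ->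
  (alpha%:E <= muR mu S)%E -> ((1 - alpha)%:E <= muR mu S)%E -> v != 0 ->
  exists2 s, S s & muR mu (halfspace_pos v (dotp v s)) = alpha%:E.
Proof.
move=> mu_cont cS cnS S0 alpha_le alphaC_le v_neq0.
pose psi x := dotp x v; pose phi x := psi (rV_of_tuple x).
have mphi : measurable_fun setT phi := measurable_dotp_rV_of_tuple v.
have psi_cont : {within S, continuous psi}.
  exact/continuous_subspaceT/continuous_dotpl.
have [smin /set_mem Smin psi_min] := EVT_min_rV S0 cS psi_cont.
have [smax /set_mem Smax psi_max] := EVT_max_rV S0 cS psi_cont.
have mS : measurable (rV_of_tuple @^-1` S).
  apply: measurable_closed_preimage; apply: compact_closed => //; exact: norm_hausdorff.
have above_min : (alpha%:E <= mu [set x | psi smin <= phi x]%R)%E.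
  apply: le_trans alpha_le _; apply: le_measure; rewrite ?inE //.
    exact: measurable_superlevel mphi _.
  by move=> x Sx; apply: psi_min; rewrite inE.
have below_max : (mu [set x | psi smax < phi x]%R <= alpha%:E)%E.
  apply: (@le_trans _ _ (mu (~` (rV_of_tuple @^-1` S)))).
    apply: le_measure; rewrite ?inE; [exact: measurable_strict_superlevel mphi _|
      exact: measurableC|].
    by move=> x /= lt_max Sx; move: (psi_max _ (mem_set Sx)); rewrite leNgt lt_max.
  have [r muS] : exists r : R, muR mu S = r%:E.
    by exists (fine (muR mu S)); rewrite fineK // fin_num_measure.
  move: alphaC_le; rewrite probability_setC // -/(muR mu S) muS -EFinB !lee_fin.
  by move=> ?; lra.
have [t /andP[t_ge t_le] mu_t] :=
  exists_level_measure_ge mu mphi (fun t => continuous_prob_hyperplane mu v t mu_cont v_neq0)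
    _ _ _ (psi_min _ (mem_set Smax)) above_min below_max.
have [s Ss st] : (psi @` S) t.
  have psiS_itv : is_interval (psi @` S).
    by apply/connected_intervalP; exact: connected_continuous_connected.
  by apply: (psiS_itv (psi smin) (psi smax)); [exists smin|exists smax|rewrite t_ge t_le].
by exists s; rewrite // /muR /halfspace_pos dotpC -/(psi s) st.
Qed.

Theorem mainTheorem4 (R : realType) (n : nat)
  (mu : probability (n.-tuple R) R) (alpha : R) (S : set 'rV[R]_n) :
  continuous_prob mu ->
  0 <= alpha <= 1 ->
  compact S -> connected S ->
  ((Num.max alpha (1 - alpha))%:E <= muR mu S)%E ->
  exists f : 'rV[R]_n -> 'rV[R]_n,
    (forall v, unit_sphere R n v ->
       muR mu (halfspace_pos v (dotp v (f v))) = alpha%:E) /\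
    (forall v, unit_sphere R n v -> S (f v)).
Proof.
(* [0 <= alpha <= 1] is implied by the two lower bounds on mu S. *)
move=> mu_cont _ cS cnS; rewrite EFin_max ge_max => /andP[alpha_le alphaC_le].
have S0 : S !=set0.
  apply/set0P/negP => /eqP S_eq0.
  have muS0 : muR mu S = 0%:E by rewrite S_eq0 /muR preimage_set0 measure0.
  move: alpha_le alphaC_le; rewrite muS0 !lee_fin subr_le0 => alpha_le0 le1_alpha.
  by have := le_trans le1_alpha alpha_le0; rewrite ler10.
have pick_point v : exists s, unit_sphere R n v ->
    S s /\ muR mu (halfspace_pos v (dotp v s)) = alpha%:E.
  have [v1|nv1] := pselect (unit_sphere R n v); last by case: S0 => s _; exists s.
  have v_neq0 : v != 0.
    apply/eqP => v0; move: v1; rewrite /unit_sphere /= v0 /dotp big1 => [|i _].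
      by move/esym/eqP; rewrite oner_eq0.
    by rewrite mxE mul0r.
  have [s Ss hs] := exists_halfspace_through_set mu_cont cS cnS S0 alpha_le alphaC_le v_neq0.
  by exists s.
have [f hf] := choice pick_point.
by exists f; split=> v /hf[].
Qed.
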